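(* Let $S\subset\mathbb{R}^2$, $s=(s_1,s_2)\in S$, and let $\ell(x,\xi)=\rho(\|x-\xi\|)$, where $\rho:[0,\infty)\to(0,1)$ is continuously differentiable. Consider $\xi_1,\dots,\xi_N\in\mathbb{R}^2$, $\xi_k=(\xi_{k,1},\xi_{k,2})$, constrained so that $\|\xi_k-s\|=\|\xi_m-s\|>0$ for all $k,m\in\{1,\dots,N\}$. Let $\theta_k=\mathrm{atan2}(\xi_{k,2}-s_2,\xi_{k,1}-s_1)$ and $r=\|\xi_1-s\|$, and let $$I(s;\xi_{1:N})=\sum_{k=1}^N\frac{\nabla_s\ell(s,\xi_k)\nabla_s\ell(s,\xi_k)^\top}{\ell(s,\xi_k)[1-\ell(s,\xi_k)]}$$ be the Fisher information matrix for $s$ from independent binary measurements at $\xi_1,\dots,\xi_N$ with detection probabilities $\ell(s,\xi_k)$. Then: (1) For any fixed $r>0$, $\det I(s;\xi_{1:N})$ is maximised (over $\theta_1,\dots,\theta_N$) if and only if $\sum_{k=1}^N\cos(2\theta_k)=0$ and $\sum_{k=1}^N\sin(2\theta_k)=0$. (2) Under the additional constraint $r\in[r_1,r_2]$ for some $0<r_1\le r_2$, for any fixed $\theta_1,\dots,\theta_N$, $\det I(s;\xi_{1:N})$ is maximised (over $r$) if and only if $r\in\operatorname*{argmax}_{x\in[r_1,r_2]}\frac{\rho'(x)^2}{\rho(x)[1-\rho(x)]}$. (3) Optimising jointly over $\theta_1,\dots,\theta_N\in\mathbb{R}$ and $r\in[r_1,r_2]$, $\det I(s;\xi_{1:N})$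 is maximised if and only if both $\sum_{k=1}^N\cos(2\theta_k)=\sum_{k=1}^N\sin(2\theta_k)=0$ and $r\in\operatorname*{argmax}_{x\in[r_1,r_2]}\frac{\rho'(x)^2}{\rho(x)[1-\rho(x)]}$.
   Context: Here $\xi_k=s+r(\cos\theta_k,\sin\theta_k)$, so the configuration is parametrised by $r$ and $\theta_1,\dots,\theta_N$. *)

From Stdlib Require Import Reals Lra.
From Coquelicot Require Import Coquelicot.
Open Scope R_scope.

Definition norm2 (v : R * R) : R := sqrt (fst v ^ 2 + snd v ^ 2).

Definition ell (rho : R -> R) (x xi : R * R) : R :=
  rho (norm2 (fst x - fst xi, snd x - snd xi)).

Definition grad_s (rho : R -> R) (s xi : R * R) : R * R :=
  (Derive (fun t => ell rho (t, snd s) xi) (fst s),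
   Derive (fun t => ell rho (fst s, t) xi) (snd s)).

Fixpoint rsum (f : nat -> R) (n : nat) : R :=
  match n with O => 0 | S m => rsum f m + f m end.

(* Fisher information matrix I(s; xi_{1:N}) (symmetric 2x2, entries I11 I12 I22),
   sensors indexed 0..N-1 *)
Definition fim_entry (rho : R -> R) (s : R * R) (xi : nat -> R * R) (N : nat)
  (a b : R * R -> R) : R :=
  rsum (fun k =>
          a (grad_s rho s (xi k)) * b (grad_s rho s (xi k)) /
          (ell rho s (xi k) * (1 - ell rho s (xi k)))) N.

Definition fim_det (rho : R -> R) (s : R * R) (xi : nat -> R * R) (N : nat) : R :=
  fim_entry rho s xi N fst fst * fim_entry rho s xi N snd snd
  - fim_entry rho s xi N fst snd * fim_entry rho s xi N snd fst.

Definition config (s : R * R) (r : R) (theta : nat -> R) (k : nat) : R * R :=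
  (fst s + r * cos (theta k), snd s + r * sin (theta k)).

Definition detI (rho : R -> R) (s : R * R) (N : nat) (r : R) (theta : nat -> R) : R :=
  fim_det rho s (config s r theta) N.

Definition hfun (rho : R -> R) (x : R) : R :=
  (Derive rho x) ^ 2 / (rho x * (1 - rho x)).

Definition in_argmax (rho : R -> R) (r1 r2 r : R) : Prop :=
  r1 <= r <= r2 /\ (forall x, r1 <= x <= r2 -> hfun rho x <= hfun rho r).

Definition sum_cos2 (N : nat) (theta : nat -> R) : R := rsum (fun k => cos (2 * theta k)) N.
Definition sum_sin2 (N : nat) (theta : nat -> R) : R := rsum (fun k => sin (2 * theta k)) N.

(* On the circle of radius r around s every sensor sees the same detection
   probability rho r, and the gradient of s |-> ell(s, xi_k) is
   -rho'(r) (cos theta_k, sin theta_k).  Hence det I = hfun(r)^2 G(theta) with the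
   Gram determinant G(theta) = (sum cos^2) (sum sin^2) - (sum cos sin)^2, and the
   double-angle formulas give G = (N^2 - (sum cos 2theta_k)^2 - (sum sin 2theta_k)^2) / 4.
   So G <= N^2/4 with equality exactly for balanced angles, which exist for N >= 2
   (take theta_k = k pi / N); and by Lagrange's identity
   G = sum_{k<m} sin^2 (theta_m - theta_k) > 0 unless all theta_k agree mod pi.
   The three claims are then statements about maximising a product g(r)^2 G(theta)
   with g >= 0 and G bounded by an attained constant. *)

From Stdlib Require Import Reals Lra Lia.
From Coquelicot Require Import Coquelicot.
Open Scope R_scope.

Lemma rsum_ext f g n : (forall k, f k = g k) -> rsum f n = rsum g n.
Proof. intros H; induction n; simpl; [reflexivity | now rewrite IHn, H]. Qed.

Lemma rsum_scal c f n : rsum (fun k => c * f k) n = c * rsum f n.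
Proof. induction n; cbn [rsum]; [ring | rewrite IHn; ring]. Qed.

Lemma rsum_ge0 f n : (forall k, 0 <= f k) -> 0 <= rsum f n.
Proof. intros H; induction n; simpl; [lra | specialize (H n); lra]. Qed.

Lemma rsum_term_le f n k : (forall k, 0 <= f k) -> (k < n)%nat -> f k <= rsum f n.
Proof.
  intros H Hk; induction n as [|n IH]; [lia|]. simpl.
  destruct (Nat.eq_dec k n) as [-> | Hne].
  - pose proof (rsum_ge0 f n H). lra.
  - assert (IHk : f k <= rsum f n) by (apply IH; lia). specialize (H n). lra.
Qed.

Lemma rsum_sq_expand (a b : nat -> R) u v n :
  rsum (fun k => (a k * v - u * b k) ^ 2) n =
    v * v * rsum (fun k => a k * a k) n + u * u * rsum (fun k => b k * b k) n
    - 2 * (u * v) * rsum (fun k => a k * b k) n.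
Proof. induction n; cbn [rsum]; [ring | rewrite IHn; ring]. Qed.

Lemma lagrange_identity (a b : nat -> R) n :
  rsum (fun k => a k * a k) n * rsum (fun k => b k * b k) n
  - rsum (fun k => a k * b k) n ^ 2
  = rsum (fun m => rsum (fun k => (a k * b m - a m * b k) ^ 2) m) n.
Proof. induction n; cbn [rsum]; [ring | rewrite <- IHn, rsum_sq_expand; ring]. Qed.

Lemma rsum_cos_sq N th :
  rsum (fun k => cos (th k) * cos (th k)) N = (INR N + sum_cos2 N th) / 2.
Proof.
  unfold sum_cos2; induction N; cbn [rsum]; [simpl; field|].
  rewrite IHN, S_INR, cos_2a_cos; field.
Qed.

Lemma rsum_sin_sq N th :
  rsum (fun k => sin (th k) * sin (th k)) N = (INR N - sum_cos2 N th) / 2.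
Proof.
  unfold sum_cos2; induction N; cbn [rsum]; [simpl; field|].
  rewrite IHN, S_INR, cos_2a_sin; field.
Qed.

Lemma rsum_cos_sin N th :
  rsum (fun k => cos (th k) * sin (th k)) N = sum_sin2 N th / 2.
Proof.
  unfold sum_sin2; induction N; cbn [rsum]; [simpl; field|].
  rewrite IHN, sin_2a; field.
Qed.

Definition gram_det (N : nat) (th : nat -> R) : R :=
  rsum (fun k => cos (th k) * cos (th k)) N * rsum (fun k => sin (th k) * sin (th k)) N
  - rsum (fun k => cos (th k) * sin (th k)) N ^ 2.

Lemma gram_det_double_angle N th :
  gram_det N th = (INR N ^ 2 - sum_cos2 N th ^ 2 - sum_sin2 N th ^ 2) / 4.
Proof. unfold gram_det; rewrite rsum_cos_sq, rsum_sin_sq, rsum_cos_sin; field. Qed.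

Lemma gram_det_le N th : gram_det N th <= INR N ^ 2 / 4.
Proof.
  rewrite gram_det_double_angle.
  pose proof (pow2_ge_0 (sum_cos2 N th)); pose proof (pow2_ge_0 (sum_sin2 N th)); lra.
Qed.

Lemma gram_det_eq_max N th :
  gram_det N th = INR N ^ 2 / 4 <-> sum_cos2 N th = 0 /\ sum_sin2 N th = 0.
Proof.
  rewrite gram_det_double_angle; split.
  - intros H; split; nra.
  - intros [-> ->]; field.
Qed.

Lemma gram_det_sum_sin_sq N th :
  gram_det N th = rsum (fun m => rsum (fun k => sin (th m - th k) ^ 2) m) N.
Proof.
  unfold gram_det; rewrite lagrange_identity.
  apply rsum_ext; intro m; apply rsum_ext; intro k.
  rewrite sin_minus; ring.
Qed.

Lemma gram_det_gt0_ordered N th k m : (m < k)%nat -> (k < N)%nat ->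
  sin (th k - th m) <> 0 -> 0 < gram_det N th.
Proof.
  intros Hmk Hk Hs. rewrite gram_det_sum_sin_sq.
  assert (Hsq : 0 < sin (th k - th m) ^ 2) by (apply pow2_gt_0; exact Hs).
  eapply Rlt_le_trans;
    [| apply (rsum_term_le (fun m => rsum (fun k => sin (th m - th k) ^ 2) m) N k);
       [intro; apply rsum_ge0; intro; apply pow2_ge_0 | exact Hk]].
  eapply Rlt_le_trans; [exact Hsq |].
  apply (rsum_term_le (fun j => sin (th k - th j) ^ 2)); [intro; apply pow2_ge_0 | exact Hmk].
Qed.

Lemma gram_det_gt0 N th k m : (k < N)%nat -> (m < N)%nat ->
  sin (th k - th m) <> 0 -> 0 < gram_det N th.
Proof.
  intros Hk Hm Hs. destruct (Nat.lt_total k m) as [H | [-> | H]].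
  - apply (gram_det_gt0_ordered N th m k); auto.
    replace (th m - th k) with (- (th k - th m)) by ring. rewrite sin_neg. lra.
  - replace (th m - th m) with 0 in Hs by ring. rewrite sin_0 in Hs. lra.
  - now apply (gram_det_gt0_ordered N th k m).
Qed.

Lemma rsum_cos_arith x n :
  2 * sin x * rsum (fun k => cos (2 * (INR k * x))) n = sin ((2 * INR n - 1) * x) + sin x.
Proof.
  induction n; cbn [rsum].
  - replace ((2 * INR 0 - 1) * x) with (- x) by (simpl; ring). rewrite sin_neg; ring.
  - rewrite Rmult_plus_distr_l, IHn, S_INR.
    replace ((2 * (INR n + 1) - 1) * x) with (2 * (INR n * x) + x) by ring.
    replace ((2 * INR n - 1) * x) with (2 * (INR n * x) - x) by ring.
    rewrite sin_plus, sin_minus; ring.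
Qed.

Lemma rsum_sin_arith x n :
  2 * sin x * rsum (fun k => sin (2 * (INR k * x))) n = cos x - cos ((2 * INR n - 1) * x).
Proof.
  induction n; cbn [rsum].
  - replace ((2 * INR 0 - 1) * x) with (- x) by (simpl; ring). rewrite cos_neg; ring.
  - rewrite Rmult_plus_distr_l, IHn, S_INR.
    replace ((2 * (INR n + 1) - 1) * x) with (2 * (INR n * x) + x) by ring.
    replace ((2 * INR n - 1) * x) with (2 * (INR n * x) - x) by ring.
    rewrite cos_plus, cos_minus; ring.
Qed.

Definition equispaced (N : nat) (k : nat) : R := INR k * (PI / INR N).

Lemma equispaced_balanced N : (2 <= N)%nat ->
  sum_cos2 N (equispaced N) = 0 /\ sum_sin2 N (equispaced N) = 0.
Proof.
  intros HN. set (x := PI / INR N).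
  assert (HN' : 2 <= INR N) by (apply (le_INR 2); lia).
  assert (Hx : 0 < x < PI).
  { unfold x; pose proof PI_RGT_0; split.
    - apply Rdiv_lt_0_compat; lra.
    - apply (Rmult_lt_reg_r (INR N)); [lra|]. field_simplify; nra. }
  assert (Hs : sin x <> 0) by (apply Rgt_not_eq, sin_gt_0; lra).
  assert (Hturn : (2 * INR N - 1) * x = - x + 2 * INR 1 * PI) by (unfold x; simpl; field; lra).
  pose proof (rsum_cos_arith x N) as Hc; pose proof (rsum_sin_arith x N) as Hsn.
  rewrite Hturn, sin_period, sin_neg in Hc; rewrite Hturn, cos_period, cos_neg in Hsn.
  unfold sum_cos2, sum_sin2, equispaced; fold x; split;
    apply (Rmult_eq_reg_l (2 * sin x)); lra.
Qed.

Lemma sq_dist_config s r th k :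
  (fst s - fst (config s r th k)) ^ 2 + (snd s - snd (config s r th k)) ^ 2 = r ^ 2.
Proof.
  unfold config; cbn [fst snd].
  replace ((fst s - (fst s + r * cos (th k))) ^ 2 + (snd s - (snd s + r * sin (th k))) ^ 2)
    with (r ^ 2 * (sin (th k) ^ 2 + cos (th k) ^ 2)) by ring.
  rewrite <- !Rsqr_pow2, sin2_cos2; ring.
Qed.

Lemma dist_config s r th k : 0 < r ->
  sqrt ((fst s - fst (config s r th k)) ^ 2 + (snd s - snd (config s r th k)) ^ 2) = r.
Proof. intros Hr. rewrite sq_dist_config. apply sqrt_pow2; lra. Qed.

Lemma ell_config rho s r th k : 0 < r -> ell rho s (config s r th k) = rho r.
Proof. intros Hr. unfold ell, norm2; cbn [fst snd]. now rewrite dist_config. Qed.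

Lemma Derive_comp_dist (rho : R -> R) (p b x : R) :
  0 < (x - p) ^ 2 + b ^ 2 -> ex_derive rho (sqrt ((x - p) ^ 2 + b ^ 2)) ->
  Derive (fun t => rho (sqrt ((t - p) ^ 2 + b ^ 2))) x =
  Derive rho (sqrt ((x - p) ^ 2 + b ^ 2)) * ((x - p) / sqrt ((x - p) ^ 2 + b ^ 2)).
Proof.
  intros Hpos Hd.
  assert (Hsq : (x + - p) * ((x + - p) * 1) + b * (b * 1) = (x - p) ^ 2 + b ^ 2) by ring.
  apply is_derive_unique; auto_derive; rewrite Hsq.
  - now split.
  - change (fun y => rho y) with rho. field. now apply Rgt_not_eq, sqrt_lt_R0.
Qed.

Lemma grad_config rho s r th k : 0 < r -> ex_derive rho r ->
  grad_s rho s (config s r th k) =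
  (- Derive rho r * cos (th k), - Derive rho r * sin (th k)).
Proof.
  intros Hr Hd.
  pose proof (dist_config s r th k Hr) as Hdist; pose proof (sq_dist_config s r th k) as Hsq.
  unfold config in Hdist, Hsq |- *; cbn [fst snd] in Hdist, Hsq.
  set (u := fst s - (fst s + r * cos (th k))) in Hdist, Hsq.
  set (v := snd s - (snd s + r * sin (th k))) in Hdist, Hsq.
  assert (Hpos : 0 < u ^ 2 + v ^ 2) by (rewrite Hsq; apply pow2_gt_0; lra).
  unfold grad_s, ell, norm2; cbn [fst snd]; f_equal.
  - rewrite Derive_comp_dist; fold u; fold v.
    + rewrite Hdist; unfold u; field; lra.
    + exact Hpos.
    + now rewrite Hdist.
  - rewrite (Derive_ext _ (fun t => rho (sqrt ((t - (snd s + r * sin (th k))) ^ 2 + u ^ 2))))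
      by (intro; now rewrite Rplus_comm).
    rewrite Derive_comp_dist; fold v; rewrite (Rplus_comm (v ^ 2)).
    + rewrite Hdist; unfold v; field; lra.
    + lra.
    + now rewrite Hdist.
Qed.

Lemma fim_entry_config rho s N r th (a b : R * R -> R) :
  0 < r -> ex_derive rho r -> 0 < rho r < 1 ->
  (forall c u v, a (c * u, c * v) = c * a (u, v)) ->
  (forall c u v, b (c * u, c * v) = c * b (u, v)) ->
  fim_entry rho s (config s r th) N a b =
  hfun rho r * rsum (fun k => a (cos (th k), sin (th k)) * b (cos (th k), sin (th k))) N.
Proof.
  intros Hr Hd H01 Ha Hb. unfold fim_entry. rewrite <- rsum_scal.
  apply rsum_ext; intro k.
  rewrite grad_config, ell_config, Ha, Hb by assumption.
  unfold hfun; field; nra.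
Qed.

Lemma detI_factor rho s N r th : 0 < r -> ex_derive rho r -> 0 < rho r < 1 ->
  detI rho s N r th = hfun rho r ^ 2 * gram_det N th.
Proof.
  intros Hr Hd H01. unfold detI, fim_det, gram_det.
  rewrite !fim_entry_config by (reflexivity || assumption); cbn [fst snd].
  rewrite (rsum_ext (fun k => sin (th k) * cos (th k)) (fun k => cos (th k) * sin (th k)))
    by (intro; ring).
  ring.
Qed.

Lemma hfun_ge0 rho x : 0 < rho x < 1 -> 0 <= hfun rho x.
Proof.
  intros H. unfold hfun. apply Rmult_le_pos; [apply pow2_ge_0|].
  apply Rlt_le, Rinv_0_lt_compat; nra.
Qed.

Lemma hfun_gt0 rho x : 0 < rho x < 1 -> Derive rho x <> 0 -> 0 < hfun rho x.
Proof.
  intros H Hd. unfold hfun. apply Rmult_lt_0_compat.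
  - now apply pow2_gt_0.
  - apply Rinv_0_lt_compat; nra.
Qed.

Section ProductMaximisation.

Context {X Y : Type}.
Variables (I : X -> Prop) (F : X -> Y -> R) (g : X -> R) (D : Y -> R).
Variables (M : R) (y0 : Y).
Hypothesis F_factor : forall x y, I x -> F x y = g x ^ 2 * D y.
Hypothesis g_ge0 : forall x, I x -> 0 <= g x.
Hypothesis D_le : forall y, D y <= M.
Hypothesis D_y0 : D y0 = M.

Lemma argmax_snd_factor x y : I x -> 0 < g x ->
  (forall y', F x y' <= F x y) <-> D y = M.
Proof.
  intros Hx Hg. assert (Hg2 : 0 < g x ^ 2) by (apply pow2_gt_0; lra).
  split.
  - intros H. specialize (H y0). rewrite !F_factor, D_y0 in H by exact Hx.
    apply Rmult_le_reg_l in H; [| exact Hg2]. specialize (D_le y). lra.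
  - intros HD y'. rewrite !F_factor, HD by exact Hx.
    apply Rmult_le_compat_l; [lra | apply D_le].
Qed.

Lemma argmax_fst_factor x y : I x -> 0 < D y ->
  (forall x', I x' -> F x' y <= F x y) <-> (forall x', I x' -> g x' <= g x).
Proof.
  intros Hx HD. pose proof (g_ge0 x Hx) as Hgx.
  split; intros H x' Hx'; specialize (H x' Hx'); pose proof (g_ge0 x' Hx');
    rewrite !F_factor in * by assumption.
  - apply Rmult_le_reg_r in H; [nra | exact HD].
  - apply Rmult_le_compat_r; [lra | nra].
Qed.

Lemma argmax_factor x y : I x -> 0 < M -> (exists x', I x' /\ 0 < g x') ->
  (forall x' y', I x' -> F x' y' <= F x y) <-> D y = M /\ (forall x', I x' -> g x' <= g x).
Proof.
  intros Hx HM [x1 [Hx1 Hg1]]. pose proof (g_ge0 x Hx) as Hgx0.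
  assert (HgM : forall x', I x' -> F x' y0 = g x' ^ 2 * M)
    by (intros; now rewrite F_factor, D_y0).
  split.
  - intros H.
    assert (Hgx : 0 < g x).
    { pose proof (H x1 y0 Hx1) as H1. rewrite HgM, F_factor in H1 by assumption.
      assert (0 < g x1 ^ 2 * M) by (apply Rmult_lt_0_compat; nra).
      destruct (Rle_lt_or_eq_dec 0 (g x) Hgx0) as [| Hz]; [lra |].
      rewrite <- Hz in H1. lra. }
    assert (HD : D y = M) by (apply (argmax_snd_factor x y Hx Hgx); intro; now apply H).
    split; [exact HD |].
    intros x' Hx'. pose proof (H x' y0 Hx') as H1. pose proof (g_ge0 x' Hx').
    rewrite HgM, F_factor, HD in H1 by assumption.
    apply Rmult_le_reg_r in H1; [nra | exact HM].
  - intros [HD Hg] x' y' Hx'. specialize (Hg x' Hx'). pose proof (g_ge0 x' Hx').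
    rewrite !F_factor, HD by assumption.
    apply Rle_trans with (g x' ^ 2 * M).
    + apply Rmult_le_compat_l; [apply pow2_ge_0 | exact (D_le y')].
    + apply Rmult_le_compat_r; [lra | nra].
Qed.

End ProductMaximisation.

Theorem theorem5 (rho : R -> R) (s : R * R) (N : nat)
  (Hrho01 : forall x, 0 <= x -> 0 < rho x < 1)
  (Hder : forall x, 0 < x -> ex_derive rho x)
  (Hcont : forall x, 0 < x -> continuous (Derive rho) x) :
  (* (1) fixed r > 0, optimise over theta *)
  (forall (r : R) (theta : nat -> R),
      (2 <= N)%nat -> 0 < r -> Derive rho r <> 0 ->
      ((forall theta' : nat -> R, detI rho s N r theta' <= detI rho s N r theta) <->
       (sum_cos2 N theta = 0 /\ sum_sin2 N theta = 0)))
  /\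
  (* (2) fixed theta, optimise over r in [r1, r2] *)
  (forall (r1 r2 : R) (theta : nat -> R),
      0 < r1 -> r1 <= r2 ->
      (exists k m, (k < N)%nat /\ (m < N)%nat /\ sin (theta k - theta m) <> 0) ->
      forall r, r1 <= r <= r2 ->
      ((forall r', r1 <= r' <= r2 -> detI rho s N r' theta <= detI rho s N r theta) <->
       in_argmax rho r1 r2 r))
  /\
  (* (3) joint optimisation over theta and r in [r1, r2] *)
  (forall (r1 r2 : R),
      (2 <= N)%nat -> 0 < r1 -> r1 <= r2 ->
      (exists x, r1 <= x <= r2 /\ Derive rho x <> 0) ->
      forall (r : R) (theta : nat -> R), r1 <= r <= r2 ->
      ((forall (r' : R) (theta' : nat -> R), r1 <= r' <= r2 ->
          detI rho s N r' theta' <= detI rho s N r theta) <->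
       (sum_cos2 N theta = 0 /\ sum_sin2 N theta = 0 /\ in_argmax rho r1 r2 r))).
Proof.
  assert (Hfactor : forall (I : R -> Prop), (forall x, I x -> 0 < x) ->
            forall r th, I r -> detI rho s N r th = hfun rho r ^ 2 * gram_det N th).
  { intros I HI r th Hr. specialize (HI r Hr).
    apply detI_factor; [| apply Hder | apply Hrho01]; lra. }
  assert (Hh_ge0 : forall (I : R -> Prop), (forall x, I x -> 0 < x) ->
            forall x, I x -> 0 <= hfun rho x).
  { intros I HI x Hx. specialize (HI x Hx). apply hfun_ge0, Hrho01; lra. }
  assert (Hbalanced : (2 <= N)%nat -> gram_det N (equispaced N) = INR N ^ 2 / 4)
    by (intros; now apply gram_det_eq_max, equispaced_balanced).
  split; [| split].
  - intros r th HN Hr Hd. rewrite <- gram_det_eq_max.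
    apply (argmax_snd_factor (fun x => 0 < x) (detI rho s N) (hfun rho) (gram_det N) _
             (equispaced N) (Hfactor _ (fun _ H => H)) (gram_det_le N) (Hbalanced HN)); [exact Hr|].
    apply hfun_gt0; [apply Hrho01; lra | exact Hd].
  - intros r1 r2 th Hr1 Hr12 [k [m [Hk [Hm Hs]]]] r Hr.
    set (I := fun x => r1 <= x <= r2).
    assert (HI : forall x, I x -> 0 < x) by (unfold I; intros; lra).
    etransitivity.
    + exact (argmax_fst_factor I _ (hfun rho) (gram_det N) (Hfactor I HI) (Hh_ge0 I HI) r th Hr
               (gram_det_gt0 N th k m Hk Hm Hs)).
    + unfold in_argmax, I; tauto.
  - intros r1 r2 HN Hr1 Hr12 [x [Hx Hdx]] r th Hr.
    set (I := fun x => r1 <= x <= r2).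
    assert (HI : forall x, I x -> 0 < x) by (unfold I; intros; lra).
    etransitivity.
    + apply (argmax_factor I _ (hfun rho) (gram_det N) _ (equispaced N) (Hfactor I HI)
               (Hh_ge0 I HI) (gram_det_le N) (Hbalanced HN) r th Hr).
    + assert (2 <= INR N) by (apply (le_INR 2); lia). nra.
    + exists x. split; [exact Hx|]. apply hfun_gt0; [apply Hrho01; lra | exact Hdx].
    + rewrite gram_det_eq_max; unfold in_argmax, I; tauto.
Qed.
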